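(* Assume the $abc$-conjecture. Let $k \ge 3$ be an integer and $\epsilon>0$. Then there is a constant $C_{k,\epsilon}>0$ such that for all real $x \ge 1$ and all real $y$ with $1 \le y \le x$, \[ Q_k(x+y) - Q_k(x) \le C_{k,\epsilon}\, y^{(2+\epsilon)/k}. \]
   Context: A positive integer $n$ is $k$-full if every prime $p$ dividing $n$ satisfies $p^k \mid n$. $Q_k(x)$ denotes the number of $k$-full positive integers $n \le x$. For a nonzero integer $m$, $\kappa(m)=\prod_{p\mid m} p$ is the product of the distinct primes dividing $m$. The $abc$-conjecture is the statement: for every $\epsilon>0$ there is a constant $C_\epsilon>0$ such that for all integers $a,b,c$ with $a+b=c$ and $\gcd(a,b)=1$, one has $\max\{|a|,|b|,|c|\} \le C_\epsilon\, \kappa(abc)^{1+\epsilon}$. *)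

From Stdlib Require Import Reals ZArith.
From mathcomp Require Import all_boot.

Definition kappa (m : Z) : nat := (\prod_(p <- primes (Z.abs_nat m)) p)%N.

Definition kfull (k n : nat) : bool :=
  (0 < n)%N && all (fun p => p ^ k %| n)%N (primes n).

Definition Qk (k : nat) (x : R) : nat :=
  (\sum_(1 <= n < (Z.to_nat (Int_part x)).+1) (kfull k n : nat))%N.

Local Open Scope R_scope.

(* The abc-conjecture (restricted to abc <> 0, so that kappa(abc) is as in
   the paper's definition for nonzero integers). *)
Definition abc_conjecture : Prop :=
  forall eps : R, 0 < eps ->
  exists C : R, 0 < C /\
  forall a b c : Z, (a + b = c)%Z -> Z.gcd a b = 1%Z -> (a * b * c <> 0)%Z ->
    IZR (Z.max (Z.abs a) (Z.max (Z.abs b) (Z.abs c)))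
      <= C * Rpower (INR (kappa (a * b * c))) (1 + eps).

From Stdlib Require Import Reals ZArith Lra Lia.
From mathcomp Require Import all_boot zify.

(* Let n < m be k-full numbers in (x, 2x].  Dividing n, m - n and m by
   g = gcd(n, m - n) gives a coprime triple a + b = c with
   rad(abc) <= rad(n) rad(m) b, and rad(n), rad(m) <= (2x)^(1/k).  The
   abc-conjecture then gives x < m = c g <= C (2x)^(2(1+e)/k) (m - n)^(1+e),
   so k-full numbers near x are x^((1 - 2(1+e)/k)/(1+e)) / const apart.
   Hence (x, x + y] with y <= x contains at most
   1 + const y x^(-(1 - 2(1+e)/k)/(1+e)) <= 1 + const y^(1 - (1 - 2(1+e)/k)/(1+e))
   of them, and a small e turns the exponent into (2 + eps)/k. *)

Definition rad (n : nat) : nat := \prod_(p <- primes n) p.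

Lemma kappa_Z_of_nat n : kappa (Z.of_nat n) = rad n.
Proof. by rewrite /kappa Zabs2Nat.id. Qed.

Lemma rad_gt0 n : 0 < rad n.
Proof.
by rewrite /rad big_seq prodn_cond_gt0 // => p; rewrite mem_primes => /andP[/prime_gt0].
Qed.

Lemma dvdn_rad p n : p \in primes n -> p %| rad n.
Proof. by move=> pn; rewrite /rad (big_rem p pn) dvdn_mulr. Qed.

Lemma prod_primes_expn_dvd (s : seq nat) e N :
  uniq s -> all prime s -> (forall p, p \in s -> p ^ e %| N) ->
  (\prod_(p <- s) p) ^ e %| N.
Proof.
elim: s => [|p s IHs] /=; first by rewrite big_nil exp1n dvd1n.
move=> /andP[p_s s_uniq] /andP[p_pr s_pr] dvd_s.
have p_coprime : coprime p (\prod_(q <- s) q).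
  rewrite prime_coprime // Euclid_dvd_prod // big_has; apply/hasP => -[q qs].
  by rewrite dvdn_prime2 // ?(allP s_pr) // => /eqP pq; rewrite pq qs in p_s.
rewrite big_cons expnMn Gauss_dvd ?coprimeXl ?coprimeXr //.
rewrite dvd_s ?mem_head //=; apply: IHs => // q qs.
by rewrite dvd_s // inE qs orbT.
Qed.

Lemma rad_dvd m N : 0 < N -> (forall p, prime p -> p %| m -> p %| N) -> rad m %| N.
Proof.
move=> N_gt0 dvd_N; rewrite -(expn1 (rad m)).
apply: prod_primes_expn_dvd; [exact: primes_uniq | exact: all_prime_primes |].
by move=> p; rewrite mem_primes expn1 => /and3P[p_pr _ /dvd_N]; apply.
Qed.

Lemma rad_kfull_leq k n : kfull k n -> rad n ^ k <= n.
Proof.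
move=> /andP[n_gt0 /allP dvd_n]; apply: dvdn_leq => //.
exact: prod_primes_expn_dvd (primes_uniq n) (all_prime_primes n) dvd_n.
Qed.

Lemma rad_abc_dvd [a] b [g] :
  0 < a -> 0 < g -> rad (a * b * (a + b)) %| rad (a * g) * rad ((a + b) * g) * b.
Proof.
move=> a_gt0 g_gt0.
have [-> | b_gt0] := posnP b; first by rewrite !muln0 dvdn0.
apply: rad_dvd => [|p p_pr]; first by rewrite !muln_gt0 b_gt0 !rad_gt0.
have dvd_rad m : 0 < m * g -> p %| m -> p %| rad (m * g).
  by move=> mg_gt0 pm; rewrite dvdn_rad // mem_primes p_pr mg_gt0 dvdn_mulr.
rewrite !Euclid_dvdM // => /orP[/orP[pa | ->] | pc]; rewrite ?orbT //.
- by rewrite dvd_rad ?muln_gt0 ?a_gt0.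
- by rewrite [p %| rad ((a + b) * g)]dvd_rad ?orbT // muln_gt0 addn_gt0 a_gt0.
Qed.

Lemma gcdn_coprime_split [n] d : 0 < n ->
  exists a b g, [/\ n = a * g, d = b * g, coprime a b & 0 < g].
Proof.
move=> n_gt0; set g := gcdn n d.
have g_gt0 : 0 < g by rewrite gcdn_gt0 n_gt0.
exists (n %/ g), (d %/ g), g; rewrite !divnK ?dvdn_gcdl ?dvdn_gcdr //; split=> //.
by rewrite /coprime -(eqn_pmul2r g_gt0) mul1n muln_gcdl !divnK ?dvdn_gcdl ?dvdn_gcdr.
Qed.

Local Open Scope R_scope.

Lemma ln_le_ln x y : 0 < x -> x <= y -> ln x <= ln y.
Proof. by move=> x_gt0 [/(ln_increasing _ _ x_gt0)/Rlt_le | ->]; [|right]. Qed.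

Lemma exp_le_exp x y : x <= y -> exp x <= exp y.
Proof. by case=> [/exp_increasing/Rlt_le | ->]; [|right]. Qed.

Lemma INR_gt0 [n] : (0 < n)%N -> 0 < INR n.
Proof. by move=> n_gt0; apply/lt_0_INR/ltP. Qed.

Lemma ln_INR_le [m n] : (0 < m)%N -> (m <= n)%N -> ln (INR m) <= ln (INR n).
Proof. by move=> m_gt0 /leP/le_INR; exact: ln_le_ln (INR_gt0 m_gt0). Qed.

Lemma ln_INR_ge0 [n] : (0 < n)%N -> 0 <= ln (INR n).
Proof. by move=> n_gt0; rewrite -ln_1 -[1]/(INR 1); apply: ln_INR_le. Qed.

Lemma ln_INR_mul m n :
  (0 < m)%N -> (0 < n)%N -> ln (INR (m * n)) = ln (INR m) + ln (INR n).
Proof. by move=> m_gt0 n_gt0; rewrite mult_INR ln_mult //; exact: INR_gt0. Qed.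

Lemma INR_expn m n : INR (m ^ n) = INR m ^ n.
Proof. by elim: n => [|n IHn] //=; rewrite expnS mult_INR IHn. Qed.

Lemma kfull_ln_rad [k n] : kfull k n -> INR k * ln (INR (rad n)) <= ln (INR n).
Proof.
move=> kn; rewrite -ln_pow -?INR_expn; last exact/INR_gt0/rad_gt0.
by apply: ln_INR_le; [rewrite expn_gt0 rad_gt0 | exact: rad_kfull_leq].
Qed.

Lemma sparse_count_le [f : pred nat] [a b : nat] [D : R] :
  (forall n m, (a < n)%N -> (n < m)%N -> (m <= b)%N -> f n -> f m -> D <= INR (m - n)) ->
  (0 < \sum_(a.+1 <= n < b.+1) f n)%N ->
  (INR (\sum_(a.+1 <= n < b.+1) f n) - 1) * D <= INR b - INR a.+1.
Proof.
move=> gap; pose T c := (\sum_(a.+1 <= n < c.+1) f n)%N; rewrite -/(T b) S_INR.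
suff last_member c : (c <= b)%N -> (0 < T c)%N ->
    exists2 n, (a < n <= c)%N & f n /\ (INR (T c) - 1) * D <= INR n - (INR a + 1).
  move=> /(last_member b (leqnn b)) [n /andP[_ /leP/le_INR nb] [_ count_n]]; lra.
elim: c => [|c IHc] cb; first by rewrite /T big_geq.
have [c_lt_a | ac] := leqP c.+1 a; first by rewrite /T big_geq.
rewrite /T big_nat_recr //= -/(T c).
case fc: (f c.+1); last first.
  by rewrite addn0 => /(IHc (ltnW cb)) [n /andP[an nc] fn]; exists n; rewrite ?an ?leqW.
move=> _; exists c.+1; first by rewrite ac leqnn.
split; first exact: fc.
rewrite addn1 (S_INR (T c)).
have [-> | Tc_gt0] := posnP (T c).
  by have := le_INR _ _ (elimT leP ac); rewrite INR_0 !S_INR; lra.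
have [n /andP[an nc] [fn count_n]] := IHc (ltnW cb) Tc_gt0.
have := gap n c.+1 an nc cb fn fc; rewrite minus_INR; last exact/leP/leqW.
lra.
Qed.

Definition nat_floor (r : R) : nat := Z.to_nat (Int_part r).

Lemma nat_floor_bounds [r] : 0 <= r -> INR (nat_floor r) <= r < INR (nat_floor r) + 1.
Proof.
move=> r_ge0; have [floor_le floor_gt] := base_Int_part r.
have Int_ge0 : (0 <= Int_part r)%Z by apply/Zlt_succ_le/lt_IZR; rewrite succ_IZR; lra.
by rewrite /nat_floor INR_IZR_INZ Z2Nat.id //; lra.
Qed.

Lemma nat_floor_le r s : 0 <= r -> r <= s -> (nat_floor r <= nat_floor s)%N.
Proof.
move=> r_ge0 rs; have [fr _] := nat_floor_bounds r_ge0.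
have [_ fs] := nat_floor_bounds (Rle_trans _ _ _ r_ge0 rs).
by rewrite -ltnS; apply/ltP/INR_lt; rewrite S_INR; lra.
Qed.

Lemma Qk_split k x x' : 0 <= x -> x <= x' ->
  Qk k x' = (Qk k x + \sum_((nat_floor x).+1 <= n < (nat_floor x').+1) kfull k n)%N.
Proof. by move=> x_ge0 xx'; rewrite /Qk -big_cat_nat // ltnS nat_floor_le. Qed.

(* The gap bound exp (gap_exponent k e * ln x - gap_constant k e C) is
   (x^(1 - 2(1+e)/k) / (C 2^(2(1+e)/k)))^(1/(1+e)). *)
Definition gap_exponent (k : nat) (e : R) : R := (1 - 2 * (1 + e) / INR k) / (1 + e).
Definition gap_constant (k : nat) (e C : R) : R :=
  (ln C + 2 * (1 + e) * ln 2 / INR k) / (1 + e).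

Section ABCGaps.

Variables (e C : R).
Hypotheses (e_ge0 : 0 <= e) (C_gt0 : 0 < C).
Hypothesis abc_eC : forall a b c : Z,
  (a + b = c)%Z -> Z.gcd a b = 1%Z -> (a * b * c <> 0)%Z ->
  IZR (Z.max (Z.abs a) (Z.max (Z.abs b) (Z.abs c)))
    <= C * Rpower (INR (kappa (a * b * c))) (1 + e).

Lemma abc_ln [a b] : (0 < a)%N -> (0 < b)%N -> coprime a b ->
  ln (INR (a + b)) <= ln C + (1 + e) * ln (INR (rad (a * b * (a + b)))).
Proof.
move=> a_gt0 b_gt0 coab.
have c_le : INR (a + b) <= C * Rpower (INR (rad (a * b * (a + b)))) (1 + e).
  rewrite -kappa_Z_of_nat !Nat2Z.inj_mul.
  apply: Rle_trans (abc_eC _ _ (Z.of_nat (a + b)) _ _ _); last lia.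
  - by rewrite INR_IZR_INZ; apply: IZR_le; lia.
  - lia.
  - lia.
rewrite -ln_Rpower -ln_mult; [ | done | exact: exp_pos].
by apply: ln_le_ln c_le; apply/INR_gt0; rewrite addn_gt0 a_gt0.
Qed.

Lemma abc_ln_gap [n m] : (0 < n)%N -> (n < m)%N ->
  ln (INR m) <= ln C + (1 + e) *
    (ln (INR (rad n)) + ln (INR (rad m)) + ln (INR (m - n))).
Proof.
move=> n_gt0 lt_nm.
have [a [b [g [nE dE coab g_gt0]]]] := gcdn_coprime_split (m - n) n_gt0.
have mE : m = ((a + b) * g)%N by lia.
have a_gt0 : (0 < a)%N by lia.
have b_gt0 : (0 < b)%N by lia.
have rad_le : (rad (a * b * (a + b)) <= rad n * rad m * b)%N.
  rewrite nE mE; apply: dvdn_leq (rad_abc_dvd b a_gt0 g_gt0).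
  by rewrite !muln_gt0 b_gt0 !rad_gt0.
have ln_rad := ln_INR_le (rad_gt0 _) rad_le.
rewrite !ln_INR_mul ?muln_gt0 ?rad_gt0 // in ln_rad.
have ln_rad_e := Rmult_le_compat_l (1 + e) _ _ ltac:(lra) ln_rad.
have abc_ab := abc_ln a_gt0 b_gt0 coab.
have ln_g_ge0 := ln_INR_ge0 g_gt0.
rewrite dE {1}mE !ln_INR_mul ?addn_gt0 ?a_gt0 //.
nra.
Qed.

Lemma kfull_gap k x n m : (0 < k)%N -> 0 < x -> x < INR n -> (n < m)%N ->
  INR m <= 2 * x -> kfull k n -> kfull k m ->
  gap_exponent k e * ln x - gap_constant k e C <= ln (INR (m - n)).
Proof.
move=> k_gt0 x_gt0 xn lt_nm mx kn km.
have n_gt0 : (0 < n)%N by case/andP: kn.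
have nm : INR n < INR m by apply/lt_INR/ltP.
have K_gt0 := INR_gt0 k_gt0; set K := INR k in K_gt0 *.
set u := (ln 2 + ln x) / K.
have ln_rad_le j : kfull k j -> INR j <= 2 * x -> ln (INR (rad j)) <= u.
  move=> kj jx; have j_gt0 : 0 < INR j by apply/INR_gt0; case/andP: kj.
  have ln_j : ln (INR j) <= ln 2 + ln x by rewrite -ln_mult //; [apply: ln_le_ln | lra].
  have Ku : K * u = ln 2 + ln x by rewrite /u; field; lra.
  apply: (Rmult_le_reg_l K) => //; rewrite Ku; have := kfull_ln_rad kj; rewrite -/K; lra.
have ln_rad_n := ln_rad_le n kn ltac:(lra).
have ln_rad_m := ln_rad_le m km mx.
have rad_sum := Rmult_le_compat_l (1 + e) _ _ ltac:(lra)
  (Rplus_le_compat _ _ _ _ ln_rad_n ln_rad_m).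
have ln_x : ln x < ln (INR m) by apply: ln_increasing; lra.
have gap := abc_ln_gap n_gt0 lt_nm.
have -> : gap_exponent k e * ln x - gap_constant k e C =
    (ln x - ln C - 2 * (1 + e) * u) * / (1 + e).
  by rewrite /gap_exponent /gap_constant /u -/K; field; lra.
have -> : ln (INR (m - n)) = (1 + e) * ln (INR (m - n)) * / (1 + e) by field; lra.
by apply: Rmult_le_compat_r; [apply/Rlt_le/Rinv_0_lt_compat; lra | nra].
Qed.

Lemma kfull_window_count [k x y] : (0 < k)%N -> 0 < x -> 0 <= y <= x ->
  INR (Qk k (x + y)) - INR (Qk k x)
    <= 1 + y * exp (gap_constant k e C - gap_exponent k e * ln x).
Proof.
move=> k_gt0 x_gt0 [y_ge0 yx].
rewrite (Qk_split k x (x + y)); [|lra|lra].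
have [_ a_gt] := nat_floor_bounds (Rlt_le _ _ x_gt0).
have [b_le _] := nat_floor_bounds (ltac:(lra) : 0 <= x + y).
set a := nat_floor x in a_gt *; set b := nat_floor (x + y) in b_le *.
set T := (\sum_(a.+1 <= n < b.+1) kfull k n)%N.
set c := gap_constant k e C; set al := gap_exponent k e.
have E_gt0 := exp_pos (c - al * ln x).
rewrite plus_INR; have [-> | T_gt0] := posnP T; first by rewrite INR_0; nra.
have gap n m : (a < n)%N -> (n < m)%N -> (m <= b)%N -> kfull k n -> kfull k m ->
    exp (al * ln x - c) <= INR (m - n).
  move=> an nm mb kn km.
  rewrite -(exp_ln (INR (m - n))); last by apply/INR_gt0; rewrite subn_gt0.
  apply/exp_le_exp/kfull_gap => //.
  - by have := le_INR _ _ (elimT leP an); rewrite S_INR; lra.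
  - by have := le_INR _ _ (elimT leP mb); lra.
have := sparse_count_le gap T_gt0; rewrite -/T S_INR => count_T.
have D_inv : exp (al * ln x - c) * exp (c - al * ln x) = 1.
  by rewrite -exp_plus -exp_0; congr exp; ring.
have : (INR T - 1) * exp (al * ln x - c) * exp (c - al * ln x) <= y * exp (c - al * ln x).
  by apply: Rmult_le_compat_r; lra.
rewrite Rmult_assoc D_inv; lra.
Qed.

End ABCGaps.

Lemma gap_exponent_choice [k eps] : (3 <= k)%N -> 0 < eps ->
  exists e, [/\ 0 < e, 0 <= gap_exponent k e & 1 - gap_exponent k e <= (2 + eps) / INR k].
Proof.
move=> k_ge3 eps_gt0.
have K_ge3 : 3 <= INR k by rewrite -[3]/(IZR (Z.of_nat 3)) -INR_IZR_INZ; apply/le_INR/leP.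
set K := INR k in K_ge3 *; set e := Rmin (1 / 2) (eps / K).
have e_gt0 : 0 < e by apply: Rmin_glb_lt; [lra | apply: Rdiv_lt_0_compat; lra].
have e_half : e <= 1 / 2 := Rmin_l _ _.
have e_eps : e <= eps / K := Rmin_r _ _.
exists e; split=> //.
  rewrite /gap_exponent -/K.
  have -> : (1 - 2 * (1 + e) / K) / (1 + e) = (K - 2 * (1 + e)) * / (K * (1 + e)).
    by field; lra.
  by apply: Rle_mult_inv_pos; [lra | apply: Rmult_lt_0_compat; lra].
have -> : 1 - gap_exponent k e = e - e * e / (1 + e) + 2 / K.
  by rewrite /gap_exponent -/K; field; lra.
have : 0 <= e * e / (1 + e) by apply: Rle_mult_inv_pos; nra.
have -> : (2 + eps) / K = 2 / K + eps / K by field; lra.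
lra.
Qed.

Lemma mul_exp_le_Rpower [x y al b] c : 1 <= y <= x -> 0 <= al -> 1 - al <= b ->
  y * exp (c - al * ln x) <= exp c * Rpower y b.
Proof.
move=> [y_ge1 yx] al_ge0 al_b.
have ln_y_ge0 : 0 <= ln y by rewrite -ln_1; apply: ln_le_ln; lra.
have ln_yx : al * ln y <= al * ln x by apply/Rmult_le_compat_l/ln_le_ln => //; lra.
have ln_b := Rmult_le_compat_r _ _ _ ln_y_ge0 al_b.
rewrite /Rpower -[X in X * _](exp_ln y); last lra.
rewrite -!exp_plus; apply: exp_le_exp; lra.
Qed.

Theorem theorem4 :
  abc_conjecture ->
  forall (k : nat) (eps : R), (3 <= k)%N -> 0 < eps ->
  exists C : R, 0 < C /\
  forall x y : R, 1 <= x -> 1 <= y -> y <= x ->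
    INR (Qk k (x + y)) - INR (Qk k x) <= C * Rpower y ((2 + eps) / INR k).
Proof.
move=> abc k eps k_ge3 eps_gt0.
have [e [e_gt0 al_ge0 al_le]] := gap_exponent_choice k_ge3 eps_gt0.
have [C [C_gt0 abc_eC]] := abc e e_gt0.
set c := gap_constant k e C.
exists (1 + exp c); split=> [|x y x_ge1 y_ge1 yx]; first by have := exp_pos c; lra.
have k_gt0 : (0 < k)%N by apply: leq_trans k_ge3.
have x_gt0 : 0 < x by lra.
have y_bounds : 0 <= y <= x by lra.
have := kfull_window_count _ _ (Rlt_le _ _ e_gt0) C_gt0 abc_eC k_gt0 x_gt0 y_bounds.
have := mul_exp_le_Rpower c (conj y_ge1 yx) al_ge0 al_le.
have : 1 <= Rpower y ((2 + eps) / INR k).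
  rewrite -(Rpower_O y); last lra.
  apply: Rle_Rpower => //; apply: Rle_mult_inv_pos; [lra | exact: INR_gt0].
have := exp_pos c; rewrite -/c; nra.
Qed.
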